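(* Let $(U,\mathcal{S})$ be a set system with $|\mathcal{S}|=m$, let $\epsilon\in(0,1)$, $0<\delta<1/e$, and $\epsilon'=\epsilon/(2\ln(e/\delta))$. Consider the algorithm that, on a private set $R\subseteq U$, sets $R_1=R$, $\mathcal{S}_1=\mathcal{S}$ and for $i=1,\dots,m$: picks a set $S\in\mathcal{S}_i$ with probability proportional to $\exp(\epsilon'|S\cap R_i|)$, outputs $S$, and sets $R_{i+1}=R_i\setminus S$, $\mathcal{S}_{i+1}=\mathcal{S}_i\setminus\{S\}$ (so the output is a permutation of $\mathcal{S}$). Then this algorithm is $(\epsilon,\delta)$-differentially private: for any $A,B\subseteq U$ with symmetric difference of size one and any set $\mathcal{P}$ of outputs, $\Pr[M(A)\in\mathcal{P}]\le e^{\epsilon}\Pr[M(B)\in\mathcal{P}]+\delta$. *)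

From HB Require Import structures.
From mathcomp Require Import all_boot all_order all_algebra all_fingroup.
From mathcomp Require Import reals.
From mathcomp.analysis Require Import sequences exp.
Set Implicit Arguments. Unset Strict Implicit. Unset Printing Implicit Defensive.
Import Order.TTheory GRing.Theory Num.Theory.
Local Open Scope ring_scope.

(* An output of the algorithm is an ordering of
   S, represented by a permutation pi of 'I_m: the set output at step i
   (0-based) is S (pi i). *)

Section Mech.
Variables (R : realType) (U : finType) (m : nat) (S : 'I_m -> {set U}).

(* indices still available at step i (S_{i+1} in the paper, 0-based here) *)
Definition remaining (pi : {perm 'I_m}) (i : nat) : {set 'I_m} :=
  [set pi j | j : 'I_m & i <= j]%N.

Definition residual (X : {set U}) (pi : {perm 'I_m}) (i : nat) : {set U} :=
  X :\: \bigcup_(j : 'I_m | (j < i)%N) S (pi j).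

Definition weight (eps' : R) (Y : {set U}) (k : 'I_m) : R :=
  expR (eps' * #|S k :&: Y|%:R).

Definition mech_prob (eps' : R) (X : {set U}) (pi : {perm 'I_m}) : R :=
  \prod_(i < m)
    (weight eps' (residual X pi i) (pi i) /
     \sum_(k in remaining pi i) weight eps' (residual X pi i) k).

Definition mech_Pr (eps' : R) (X : {set U}) (P : {set {perm 'I_m}}) : R :=
  \sum_(pi in P) mech_prob eps' X pi.
End Mech.

From mathcomp Require Import all_boot all_order all_algebra all_fingroup.
From mathcomp Require Import reals.
From mathcomp.analysis Require Import sequences exp.
From mathcomp Require Import ring lra.
Import Order.TTheory GRing.Theory Num.Theory.
Set Implicit Arguments. Unset Strict Implicit. Unset Printing Implicit Defensive.
Local Open Scope ring_scope.

(* Adding an element x to the private set multiplies each weight by at most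
   e^eps' and never decreases a normaliser, so every output ordering becomes at
   most e^eps' times more likely.  For the converse, condition on the first
   output k.  If x is in S_k, the residual private sets coincide afterwards and
   the step only becomes less likely.  Otherwise the step probability grows by
   the ratio rho = 1 + c (1 - s) of the normalisers, where c = e^eps' - 1 and s
   is the probability of picking a set that misses x; this is charged to the
   multiplicative budget l, leaving l - ln rho for the remaining steps.  The
   additive loss psi(l) = min(1, exp(1 - l / c)) satisfies
   s psi(l - ln rho) <= psi(l) because ln rho <= c (1 - s) and s e^(1-s) <= 1,
   so induction on the number of remaining sets gives
   Pr[M(Y) in P] <= e^l Pr[M(Y + x) in P] + psi(l).  Finally c <= 2 eps' =
   eps / ln(e/delta), hence psi(eps) <= delta. *)

Lemma enum_ord_take_drop (m i : nat) :
  take i (enum 'I_m) = [seq j : 'I_m <- enum 'I_m | (j < i)%N] /\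
  drop i (enum 'I_m) = [seq j : 'I_m <- enum 'I_m | (i <= j)%N].
Proof.
set s := enum 'I_m.
have take_lt : all (fun j : 'I_m => (j < i)%N) (take i s).
  rewrite -(all_map val (fun n => n < i)%N) map_take val_enum_ord take_iota.
  by apply/allP => n; rewrite mem_iota leq_min => /andP[_ /andP[]].
have drop_ge : all (fun j : 'I_m => (i <= j)%N) (drop i s).
  rewrite -(all_map val (fun n => i <= n)%N) map_drop val_enum_ord drop_iota.
  by apply/allP => n; rewrite mem_iota add0n => /andP[].
split; rewrite -[in RHS](cat_take_drop i s) filter_cat.
- rewrite (all_filterP take_lt) -[LHS]cats0 -(filter_pred0 (drop i s)).
  by congr (_ ++ _); apply: eq_in_filter => j /(allP drop_ge); rewrite ltnNge => ->.
- rewrite (all_filterP drop_ge) -[LHS]cat0s -(filter_pred0 (take i s)).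
  by congr (_ ++ _); apply: eq_in_filter => j /(allP take_lt); rewrite ltnNge => /negbTE ->.
Qed.

Lemma big_take_enum_ord (T : Type) (idx : T) (op : T -> T -> T) m i (F : 'I_m -> T) :
  \big[op/idx]_(j <- take i (enum 'I_m)) F j = \big[op/idx]_(j < m | (j < i)%N) F j.
Proof. by rewrite (enum_ord_take_drop m i).1 big_filter [index_enum _]unlock -enumT. Qed.

Lemma big_drop_enum_ord (T : Type) (idx : T) (op : T -> T -> T) m i (F : 'I_m -> T) :
  \big[op/idx]_(j <- drop i (enum 'I_m)) F j = \big[op/idx]_(j < m | (i <= j)%N) F j.
Proof. by rewrite (enum_ord_take_drop m i).2 big_filter [index_enum _]unlock -enumT. Qed.

Lemma setU1D_mem (T : finType) (x : T) (Y A : {set T}) :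
  x \in A -> (x |: Y) :\: A = Y :\: A.
Proof. by move=> xA; apply/setP => u; rewrite !inE; case: eqP => // ->; rewrite xA. Qed.

Lemma setU1D_notin (T : finType) (x : T) (Y A : {set T}) :
  x \notin A -> (x |: Y) :\: A = x |: (Y :\: A).
Proof. by move=> xA; apply/setP => u; rewrite !inE; case: eqP => // ->; rewrite xA. Qed.

Lemma card_symdiff1 (T : finType) (A B : {set T}) :
  #|(A :\: B) :|: (B :\: A)| = 1%N ->
  exists x, (x \notin B /\ A = x |: B) \/ (x \notin A /\ B = x |: A).
Proof.
move=> /eqP/cards1P[x hx]; exists x.
have memx u : ((u \in A) && (u \notin B)) || ((u \in B) && (u \notin A)) = (u == x).
  by have := congr1 (fun D : {set T} => u \in D) hx; rewrite !inE andbC [(u \notin A) && _]andbC.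
have := memx x; rewrite eqxx.
case: (boolP (x \in A)) => xA; case: (boolP (x \in B)) => xB //= _; [left | right];
  split => //; apply/setP => u; rewrite !inE; have := memx u;
  by case: eqP => [-> | _]; rewrite ?xA ?xB //; case: (u \in A); case: (u \in B).
Qed.

Lemma expR_ge1 (R : realType) (x : R) : 0 <= x -> 1 <= expR x.
Proof. by move=> x0; apply: le_trans (expR_ge1Dx x); rewrite lerDl. Qed.

Lemma expR_le1D2x (R : realType) (x : R) : 0 <= x <= 2^-1 -> expR x <= 1 + 2 * x.
Proof.
move=> /andP[x0 x2]; have := expR_ge1Dx (- x); rewrite expRN.
have ex := expR_gt0 x; rewrite -(ler_pM2r ex) mulVf ?gt_eqF // => h.
nra.
Qed.

Section Slack.
Variables (R : realType) (c : R).
Hypothesis c_gt0 : 0 < c.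

Definition slack (l : R) : R := Order.min 1 (expR (1 - l / c)).

Lemma slack_le1 l : slack l <= 1.
Proof. by rewrite /slack ge_min lexx. Qed.

Lemma slack_ge0 l : 0 <= slack l.
Proof. by rewrite /slack le_min ler01 expR_ge0. Qed.

Lemma slack_lt0 l : l < 0 -> slack l = 1.
Proof.
move=> l0; apply/min_idPl; rewrite -[X in X <= _]expR0 ler_expR subr_ge0 ler_pdivrMr // mul1r.
by rewrite ltW // (lt_trans l0).
Qed.

Lemma slack_le_expR l : slack l <= expR (1 - l / c).
Proof. by rewrite /slack ge_min lexx orbT. Qed.

(* The inductive step of the additive bound: an event of conditional
   probability [s] pays for the loss [ln (1 + c (1 - s))] of the budget [l]. *)
Lemma slack_step l s : 0 <= l -> 0 <= s <= 1 ->
  s * slack (l - ln (1 + c * (1 - s))) <= slack l.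
Proof.
move=> l0 /andP[s0 s1]; rewrite {2}/slack le_min; apply/andP; split.
  by rewrite -[X in _ <= X](mul1r 1) ler_pM // ?slack_ge0 ?slack_le1.
have ln_le : ln (1 + c * (1 - s)) / c <= 1 - s.
  rewrite ler_pdivrMr // [_ * c]mulrC le_ln1Dx // (@lt_le_trans _ _ 0) ?oppr_lt0 //.
  by rewrite mulr_ge0 ?subr_ge0 // ltW.
apply: (@le_trans _ _ (s * (expR (1 - l / c) * expR (1 - s)))).
  apply: ler_wpM2l => //; apply: le_trans (slack_le_expR _) _.
  by rewrite -expRD ler_expR mulrBl; lra.
rewrite mulrCA -[leRHS]mulr1 ler_wpM2l ?expR_ge0 //.
have s_le : s <= expR (s - 1) by have := expR_ge1Dx (s - 1); rewrite addrC subrK.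
apply: le_trans (ler_wpM2r (expR_ge0 _) s_le) _.
by rewrite -expRD addrA subrK subrr expR0.
Qed.

End Slack.

Section ExponentialMechanism.
Context {R : realType} {U : finType} {m : nat} (S : 'I_m -> {set U}) (e : R).

Local Notation w := (weight S e).
Local Notation wsum Y r := (\sum_(j <- r) w Y j).

Fixpoint seq_prob (Y : {set U}) (s : seq 'I_m) : R :=
  if s is k :: t then w Y k / wsum Y s * seq_prob (Y :\: S k) t else 1.

Definition perm_Pr (Y : {set U}) (r : seq 'I_m) (Q : pred (seq 'I_m)) : R :=
  \sum_(t <- permutations r | Q t) seq_prob Y t.

Lemma weight_gt0 Y k : 0 < w Y k.
Proof. exact: expR_gt0. Qed.

Lemma sum_weight_gt0 Y r : r != [::] -> 0 < wsum Y r.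
Proof.
case: r => // k t _.
by rewrite big_cons ltr_pwDl ?weight_gt0 ?sumr_ge0 // => j _; rewrite ltW ?weight_gt0.
Qed.

Lemma seq_prob_ge0 Y s : 0 <= seq_prob Y s.
Proof.
elim: s Y => [|k t IH] Y /=; first exact: ler01.
by rewrite mulr_ge0 // divr_ge0 // ltW ?weight_gt0 ?sum_weight_gt0.
Qed.

Lemma perm_Pr_ge0 Y r Q : 0 <= perm_Pr Y r Q.
Proof. by apply: sumr_ge0 => t _; apply: seq_prob_ge0. Qed.

Lemma perm_Pr_nil Y Q : perm_Pr Y [::] Q = (Q [::])%:R.
Proof. by rewrite /perm_Pr /permutations /= big_mkcond big_seq1; case: (Q [::]). Qed.

Lemma perm_Pr_cons Y r Q : uniq r -> r != [::] ->
  perm_Pr Y r Q = \sum_(k <- r) w Y k / wsum Y r *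
                    perm_Pr (Y :\: S k) (rem k r) (fun t => Q (k :: t)).
Proof.
move=> r_uniq r_nil; have r_gt0 : (0 < size r)%N by rewrite lt0n size_eq0.
rewrite /perm_Pr (perm_big _ (permutationsE r_gt0)) undup_id // big_mkcond.
rewrite big_allpairs_dep /=; apply: eq_big_seq => k kr.
rewrite mulr_sumr [RHS]big_mkcond; apply: eq_big_seq => t.
rewrite mem_permutations => t_perm; case: (Q (k :: t)) => //.
congr (_ / _ * _); apply: perm_big.
by rewrite perm_sym (permPl (perm_to_rem kr)) perm_cons perm_sym.
Qed.

Lemma perm_Pr_predT Y r : uniq r -> perm_Pr Y r predT = 1.
Proof.
elim: {r}(size r) {-2}r (erefl (size r)) Y => [|n IH] r r_size Y r_uniq.
  by rewrite (size0nil r_size) perm_Pr_nil.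
have r_nil : r != [::] by rewrite -size_eq0 r_size.
rewrite perm_Pr_cons //.
under eq_big_seq => k kr.
  rewrite (IH (rem k r)) ?rem_uniq ?size_rem ?r_size // mulr1.
  over.
by rewrite -mulr_suml divff // gt_eqF // sum_weight_gt0.
Qed.

Lemma perm_Pr_le1 Y r Q : uniq r -> perm_Pr Y r Q <= 1.
Proof.
move=> r_uniq; rewrite -(perm_Pr_predT Y r_uniq) /perm_Pr [leRHS](bigID Q) /=.
by rewrite lerDl sumr_ge0 // => t _; apply: seq_prob_ge0.
Qed.

Lemma weight_setU1_mem (Y : {set U}) x k : x \notin Y -> x \in S k -> w (x |: Y) k = expR e * w Y k.
Proof.
move=> xY xS; rewrite /weight -expRD setIUr (setIidPr _) ?sub1set //.
by rewrite cardsU1 in_setI (negbTE xY) andbF natrD mulrDr mulr1 addrC.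
Qed.

Lemma weight_setU1_notin (Y : {set U}) x k : x \notin S k -> w (x |: Y) k = w Y k.
Proof.
move=> xS; rewrite /weight setIUr (_ : S k :&: [set x] = set0) ?set0U //.
by apply/setP => u; rewrite !inE; apply/andP => -[uS /eqP ux]; rewrite -ux uS in xS.
Qed.

Section AddedElement.
Variable x : U.
Hypothesis e_ge0 : 0 <= e.

Lemma weight_le_setU1 Y k : w Y k <= w (x |: Y) k.
Proof. by rewrite ler_expR ler_wpM2l // ler_nat subset_leq_card // setIS // subsetUr. Qed.

Lemma seq_prob_setU1_le (Y : {set U}) t : x \notin Y ->
  seq_prob (x |: Y) t <= expR e * seq_prob Y t.
Proof.
elim: t Y => [|k t IH] Y xY /=; first by rewrite mulr1 expR_ge1.
have sum_le : wsum Y (k :: t) <= wsum (x |: Y) (k :: t).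
  by apply: ler_sum => j _; apply: weight_le_setU1.
have inv_le : (wsum (x |: Y) (k :: t))^-1 <= (wsum Y (k :: t))^-1.
  by rewrite lef_pV2 ?posrE ?sum_weight_gt0.
have wk_ge0 := ltW (weight_gt0 Y k).
have inv_ge0 : 0 <= (wsum Y (k :: t))^-1 by rewrite invr_ge0 ltW ?sum_weight_gt0.
case: (boolP (x \in S k)) => xS.
  rewrite setU1D_mem // weight_setU1_mem // -!mulrA ler_wpM2l ?expR_ge0 //.
  by rewrite ler_wpM2l // ler_wpM2r ?seq_prob_ge0.
have xY' : x \notin Y :\: S k by rewrite inE negb_and xY orbT.
rewrite setU1D_notin // weight_setU1_notin // [leRHS]mulrCA -!mulrA ler_wpM2l //.
by rewrite ler_pM ?invr_ge0 ?seq_prob_ge0 ?IH // ltW ?sum_weight_gt0.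
Qed.

Lemma perm_Pr_setU1_le (Y : {set U}) r Q : x \notin Y ->
  perm_Pr (x |: Y) r Q <= expR e * perm_Pr Y r Q.
Proof. by move=> xY; rewrite /perm_Pr mulr_sumr ler_sum // => t _; apply: seq_prob_setU1_le. Qed.

Lemma weight_setU1_le (Y : {set U}) k : x \notin Y -> w (x |: Y) k <= expR e * w Y k.
Proof.
move=> xY; have [xS | xS] := boolP (x \in S k); first by rewrite weight_setU1_mem.
by rewrite weight_setU1_notin // ler_peMl ?expR_ge1 // ltW ?weight_gt0.
Qed.

Lemma sum_weight_setU1_le (Y : {set U}) r : x \notin Y ->
  wsum (x |: Y) r <= expR e * wsum Y r.
Proof. by move=> xY; rewrite mulr_sumr ler_sum // => j _; apply: weight_setU1_le. Qed.

Lemma weight_frac_le_setU1 (Y : {set U}) r k : x \notin Y -> x \in S k -> r != [::] ->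
  w Y k / wsum Y r <= w (x |: Y) k / wsum (x |: Y) r.
Proof.
move=> xY xS r_nil; have sum_le := sum_weight_setU1_le r xY.
rewrite weight_setU1_mem // ler_pdivrMr ?sum_weight_gt0 // mulrAC.
by rewrite ler_pdivlMr ?sum_weight_gt0 // mulrC mulrAC ler_wpM2r // ltW ?weight_gt0.
Qed.

End AddedElement.

Section BudgetShift.
Variable x : U.
Hypothesis e_gt0 : 0 < e.
Local Notation c := (expR e - 1).

Lemma sum_weight_setU1 (Y : {set U}) r : x \notin Y ->
  wsum (x |: Y) r = wsum Y r + c * \sum_(j <- r | x \in S j) w Y j.
Proof.
move=> xY; rewrite (bigID (fun j => x \in S j)) [X in _ = X + _](bigID (fun j => x \in S j)) /=.
rewrite mulr_sumr addrAC -big_split /=.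
congr (_ + _); first by apply: eq_bigr => j xS; rewrite weight_setU1_mem // mulrBl mul1r subrKC.
by apply: eq_bigr => j xS; rewrite weight_setU1_notin.
Qed.

Lemma sum_weight_setU1_ratio (Y : {set U}) r : x \notin Y -> r != [::] ->
  wsum (x |: Y) r / wsum Y r =
  1 + c * (1 - (\sum_(j <- r | x \notin S j) w Y j) / wsum Y r).
Proof.
move=> xY r_nil; have := sum_weight_gt0 Y r_nil.
rewrite (sum_weight_setU1 r xY).
set a := \sum_(j <- r | x \in S j) w Y j; set q := \sum_(j <- r | x \notin S j) w Y j.
have -> : wsum Y r = a + q by rewrite [LHS](bigID (fun j => x \in S j)).
by move=> sum_gt0; field; rewrite gt_eqF.
Qed.

Definition shift_budget (Y : {set U}) r l : R := l - ln (wsum (x |: Y) r / wsum Y r).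

(* Conditioning on the first output [k]: if [x \in S k] the residual private
   sets agree; otherwise the bound for the residual sets is used with the
   budget [l] shifted by the change of normaliser. *)
Lemma first_output_le (Y : {set U}) r k l r' Q' : x \notin Y -> r != [::] -> 0 <= l ->
  (x \notin S k ->
    perm_Pr (Y :\: S k) r' Q' <=
      expR (shift_budget Y r l) * perm_Pr (x |: (Y :\: S k)) r' Q' +
      slack c (shift_budget Y r l)) ->
  w Y k / wsum Y r * perm_Pr (Y :\: S k) r' Q' <=
    expR l * (w (x |: Y) k / wsum (x |: Y) r * perm_Pr ((x |: Y) :\: S k) r' Q') +
    (x \notin S k)%:R * (w Y k / wsum Y r) * slack c (shift_budget Y r l).
Proof.
move=> xY r_nil l_ge0; set l' := shift_budget Y r l => residual_le.
have DA_gt0 : 0 < wsum Y r by rewrite sum_weight_gt0.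
have DB_gt0 : 0 < wsum (x |: Y) r by rewrite sum_weight_gt0.
have [xS | xS] := boolP (x \in S k).
  rewrite !mul0r addr0 setU1D_mem // [leRHS]mulrA ler_wpM2r ?perm_Pr_ge0 //.
  apply: le_trans (weight_frac_le_setU1 (ltW e_gt0) xY xS r_nil) (ler_peMl _ (expR_ge1 l_ge0)).
  by rewrite divr_ge0 ?ltW ?weight_gt0.
rewrite mulr1n mul1r setU1D_notin // weight_setU1_notin //.
apply: le_trans (ler_wpM2l _ (residual_le xS)) _; first by rewrite divr_ge0 ?ltW ?weight_gt0.
have shift : w Y k / wsum Y r * expR l' = expR l * (w Y k / wsum (x |: Y) r).
  by rewrite /l' /shift_budget expRB lnK ?posrE ?divr_gt0 //; field; rewrite !gt_eqF.
by rewrite mulrDr [X in X + _ <= _]mulrA shift -[X in X + _ <= _]mulrA.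
Qed.

Lemma perm_Pr_le_setU1 l (Y : {set U}) r Q : uniq r -> x \notin Y ->
  perm_Pr Y r Q <= expR l * perm_Pr (x |: Y) r Q + slack c l.
Proof.
have c_gt0 : 0 < c by rewrite subr_gt0 expR_gt1.
elim: {r}(size r) {-2}r (erefl (size r)) Y l Q => [|n IH] r r_size Y l Q r_uniq xY.
all: have [l_lt0 | l_ge0] := ltrP l 0; first by
  rewrite slack_lt0 // (le_trans (perm_Pr_le1 _ _ r_uniq)) // lerDr mulr_ge0 ?expR_ge0 ?perm_Pr_ge0.
  rewrite (size0nil r_size) !perm_Pr_nil.
  by rewrite ler_wpDr ?slack_ge0 // ler_peMl ?expR_ge1 // ler0n.
have r_nil : r != [::] by rewrite -size_eq0 r_size.
have residual_le k : k \in r -> x \notin S k -> forall l' Q',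
    perm_Pr (Y :\: S k) (rem k r) Q' <=
    expR l' * perm_Pr (x |: (Y :\: S k)) (rem k r) Q' + slack c l'.
  move=> kr xS l' Q'; apply: IH; rewrite ?size_rem ?r_size ?rem_uniq //.
  by rewrite inE negb_and xY orbT.
rewrite !perm_Pr_cons // big_seq.
apply: le_trans (ler_sum _ (fun k kr =>
  first_output_le xY r_nil l_ge0 (fun xS => residual_le k kr xS _ _))) _.
rewrite -big_seq big_split /= -mulr_sumr lerD2l -mulr_suml.
have DA_gt0 : 0 < wsum Y r by rewrite sum_weight_gt0.
set q := \sum_(j <- r | x \notin S j) w Y j.
have -> : \sum_(k <- r) (x \notin S k)%:R * (w Y k / wsum Y r) = q / wsum Y r.
  rewrite /q mulr_suml [RHS]big_mkcond /=; apply: eq_bigr => k _.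
  by case: (x \notin S k); rewrite ?mul1r ?mul0r.
have q_ge0 : 0 <= q by rewrite sumr_ge0 // => j _; rewrite ltW ?weight_gt0.
have q_le : q <= wsum Y r.
  by rewrite (bigID (fun j => x \notin S j)) lerDl sumr_ge0 // => j _; rewrite ltW ?weight_gt0.
rewrite /shift_budget (sum_weight_setU1_ratio xY r_nil) -/q slack_step //.
by rewrite divr_ge0 ?(ltW DA_gt0) //= ler_pdivrMr // mul1r.
Qed.

End BudgetShift.

Lemma seq_prob_prod (x0 : 'I_m) Y s : seq_prob Y s =
  \prod_(i < size s) (w (Y :\: \bigcup_(j <- take i s) S j) (nth x0 s i) /
                      \sum_(k <- drop i s) w (Y :\: \bigcup_(j <- take i s) S j) k).
Proof.
elim: s Y => [|k t IH] Y /=; first by rewrite big_ord0.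
rewrite big_ord_recl /= big_nil setD0 IH; congr (_ * _).
by apply: eq_bigr => i _; rewrite big_cons setDDl.
Qed.

Definition perm_seq (pi : {perm 'I_m}) : seq 'I_m := [seq pi i | i <- enum 'I_m].

Lemma perm_seq_inj : injective perm_seq.
Proof. by move=> p1 p2 /eq_in_map eq_p; apply/permP => i; apply: eq_p; rewrite mem_enum. Qed.

Lemma perm_seq_permutations pi : perm_seq pi \in permutations (enum 'I_m).
Proof.
rewrite mem_permutations; apply: uniq_perm.
- by rewrite map_inj_uniq ?enum_uniq //; apply: perm_inj.
- exact: enum_uniq.
by move=> j; rewrite mem_enum; apply/mapP; exists (pi^-1 j)%g; rewrite ?mem_enum ?permKV.
Qed.

Lemma mech_prob_seq_prob X pi : mech_prob S e X pi = seq_prob X (perm_seq pi).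
Proof.
have size_pi : size (perm_seq pi) = m by rewrite size_map size_enum_ord.
have [m0 | m_gt0] := posnP m.
  have -> : perm_seq pi = [::] by apply: size0nil; rewrite size_pi.
  by rewrite /mech_prob big1 // => i; exfalso; have := ltn_ord i; rewrite [X in (_ < X)%N]m0.
rewrite (seq_prob_prod (Ordinal m_gt0)) size_pi /mech_prob; apply: eq_bigr => i _.
rewrite (nth_map (Ordinal m_gt0)) ?size_enum_ord // nth_ord_enum.
rewrite -map_take -map_drop !big_map big_take_enum_ord big_drop_enum_ord.
rewrite /remaining big_imset /=; last by move=> a b _ _; apply: perm_inj.
by congr (_ / _); apply: eq_bigl => j; rewrite inE.
Qed.

Lemma mech_Pr_perm_Pr X P :
  mech_Pr S e X P = perm_Pr X (enum 'I_m) [pred t | t \in map perm_seq (enum P)].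
Proof.
rewrite /mech_Pr -big_enum /= (eq_bigr (fun pi => seq_prob X (perm_seq pi))); last first.
  by move=> pi _; rewrite mech_prob_seq_prob.
rewrite -(big_map perm_seq xpredT) /perm_Pr -[RHS]big_filter; apply: perm_big; apply: uniq_perm.
- by rewrite map_inj_uniq ?enum_uniq //; apply: perm_seq_inj.
- by rewrite filter_uniq ?permutations_uniq.
move=> t; rewrite mem_filter inE; apply/esym/andb_idr => /mapP[pi _ ->].
exact: perm_seq_permutations.
Qed.

End ExponentialMechanism.

Lemma privacy_budget (R : realType) (eps delta : R) :
  0 < eps -> eps < 1 -> 0 < delta -> delta < (expR 1)^-1 ->
  let eps' := eps / (2 * ln (expR 1 / delta)) in
  0 < eps' <= eps /\ slack (expR eps' - 1) eps <= delta.
Proof.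
move=> eps_gt0 eps_lt1 delta_gt0 delta_lt eps'.
set L := ln (expR 1 / delta).
have L_eq : L = 1 - ln delta by rewrite /L ln_div ?posrE ?expR_gt0 // expRK.
have ln_delta : ln delta < -1.
  by rewrite -(expRK (-1)) ltr_ln ?posrE ?expR_gt0 // expRN.
have eps'_L : eps' * (2 * L) = eps by rewrite /eps' -/L; field; lra.
have eps'_gt0 : 0 < eps' by rewrite /eps' -/L divr_gt0 //; lra.
have c_le : expR eps' - 1 <= 2 * eps' by rewrite lerBlDl expR_le1D2x //; nra.
have c_gt0 : 0 < expR eps' - 1 by rewrite subr_gt0 expR_gt1.
split; first by apply/andP; split; nra.
apply: le_trans; first exact: slack_le_expR.
rewrite -[leRHS]lnK ?posrE // ler_expR lerBlDr -lerBlDl -L_eq.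
rewrite ler_pdivlMr //; nra.
Qed.

Unset Implicit Arguments.

Theorem mainTheorem10 (R : realType) (U : finType) (m : nat)
  (S : 'I_m -> {set U}) (injS : injective S)
  (eps delta : R) (heps0 : 0 < eps) (heps1 : eps < 1)
  (hdelta0 : 0 < delta) (hdelta1 : delta < (expR 1)^-1) :
  let eps' := eps / (2 * ln (expR 1 / delta)) in
  forall (A B : {set U}), #|(A :\: B) :|: (B :\: A)| = 1%N ->
  forall P : {set {perm 'I_m}},
    mech_Pr S eps' A P <= expR eps * mech_Pr S eps' B P + delta.
Proof.
move=> eps' A B AB1 P.
have [/andP[eps'_gt0 eps'_le] slack_le] := privacy_budget heps0 heps1 hdelta0 hdelta1.
rewrite !mech_Pr_perm_Pr.
have [x [[xB ->] | [xA ->]]] := card_symdiff1 AB1.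
  apply: le_trans (perm_Pr_setU1_le _ (ltW eps'_gt0) _ _ xB) _.
  rewrite ler_wpDr ?(ltW hdelta0) //; apply: ler_wpM2r; first exact: perm_Pr_ge0.
  by rewrite ler_expR.
apply: le_trans (perm_Pr_le_setU1 S eps'_gt0 eps _ (enum_uniq _) xA) _.
by rewrite lerD2l.
Qed.
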